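(* Let $q$ be an odd prime power with $q\neq 3,5$. Then $\mathrm{PSL}(2,q)\notin\mathfrak{Y}_n$.
   Context: $\mathfrak{Y}_n$ denotes the class of all groups $G$ such that $N_G(A)=A$ for every non-abelian subgroup $A\le G$. *)

From HB Require Import structures.
From mathcomp Require Import all_boot all_order all_algebra all_fingroup all_solvable all_field.
Set Implicit Arguments. Unset Strict Implicit. Unset Printing Implicit Defensive.
Import GRing.Theory.
Local Open Scope group_scope.

Definition Yn (gT : finGroupType) (G : {set gT}) : Prop :=
  forall A : {group gT}, A \subset G -> ~~ abelian A -> 'N_G(A) = A.

Definition SL2 (F : finFieldType) : {set {'GL_2[F]}} :=
  [set g : {'GL_2[F]} | (\det (GLval g) == 1)%R].

Lemma SL2_group_set (F : finFieldType) : group_set (SL2 F).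
Proof.
apply/group_setP; split.
  by rewrite inE GL_1E det1.
move=> x y; rewrite !inE => /eqP dx /eqP dy.
by rewrite GL_MxE det_mulmx dx dy mulr1.
Qed.

Canonical SL2_group (F : finFieldType) := Group (SL2_group_set F).

Definition PSL2 (F : finFieldType) := (SL2_group F / 'Z(SL2_group F))%G.

(* For every such q we find a subgroup H of SL(2,q) whose image in PSL(2,q) is
   non-abelian (two elements of H have a non-central commutator), and an element
   g of SL(2,q) normalizing H with g outside +-H; then H Z / Z is a non-abelian
   subgroup of PSL(2,q) that is not self-normalizing.
   - If -1 = i^2 in F (so q >= 9): H is the group of upper triangular matrices
     with diagonal (a, a^-1), a^4 = 1, and g = diag(c, c^-1) with c^4 <> 1.
   - If -1 is not a square and q >= 11: F[i] is a field and its norm-one group,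
     cyclic of order q + 1, embeds in SL(2,q) as rotation matrices. H consists
     of the rotations by squares together with S times them, where S^2 = -1 and
     S conjugates a rotation to its inverse (S exists because -1 is a sum of two
     squares); g is the rotation by a non-square.
   - If q = 7 the subgroup H = SL(2,3) is normalized, modulo +-1, by a matrix
     outside +-H; this case is checked by computation. *)

From mathcomp Require Import all_boot all_order all_algebra all_fingroup all_solvable all_field.
From mathcomp Require Import ring zify.
Set Implicit Arguments. Unset Strict Implicit. Unset Printing Implicit Defensive.
Import GRing.Theory.

Local Open Scope group_scope.

Lemma nonabelian_quotient (gT : finGroupType) (H Z : {group gT}) (x y : gT) :
  H \subset 'N(Z) -> x \in H -> y \in H -> [~ x, y] \notin Z -> ~~ abelian (H / Z).
Proof.
move=> nZH xH yH; apply: contra; rewrite /abelian quotient_cents2 // => /subsetP.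
by apply; rewrite mem_commg.
Qed.

Lemma Yn_quotient_normalizer (gT : finGroupType) (G Z H : {group gT}) (g : gT) :
  Z <| G -> Yn (G / Z) -> H \subset G -> ~~ abelian (H / Z) -> g \in 'N_G(H) ->
  g \in Z * H.
Proof.
move=> nsZG YGZ sHG abHZ /setIP[gG nHg].
have nZG := normal_norm nsZG; have nZH := subset_trans sHG nZG.
have gNZ : g \in 'N(Z) := subsetP nZG g gG.
have : coset Z g \in 'N_(G / Z)(H / Z).
  by rewrite inE mem_quotient //=; apply/normP; rewrite -quotientJ // (normP nHg).
rewrite YGZ ?quotientS // => gHZ.
by rewrite -quotientK // inE gNZ inE.
Qed.

Lemma not_Yn_PSL2 (F : finFieldType) (H : {group {'GL_2[F]}}) (g x y : {'GL_2[F]}) :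
  H \subset SL2 F -> g \in 'N_(SL2 F)(H) -> x \in H -> y \in H ->
  [~ x, y] \notin 'Z(SL2_group F) -> g \notin 'Z(SL2_group F) * H ->
  ~ Yn (PSL2 F).
Proof.
move=> sHS gN xH yH xy_ncent gZH YPSL; apply/negP: gZH; apply/negPn.
have nZH : H \subset 'N('Z(SL2_group F)).
  exact: subset_trans sHS (normal_norm (center_normal _)).
apply: Yn_quotient_normalizer YPSL sHS _ gN; first exact: center_normal.
exact: nonabelian_quotient xH yH xy_ncent.
Qed.

Local Close Scope group_scope.
Local Open Scope ring_scope.

Section Matrices2.

Variable F : finFieldType.

Definition mx2 (a b c d : F) : 'M[F]_2 :=
  \matrix_(i < 2, j < 2)
    if (i : nat) == 0%N then (if (j : nat) == 0%N then a else b)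
    else (if (j : nat) == 0%N then c else d).

Lemma mx2_eta (M : 'M[F]_2) : M = mx2 (M 0 0) (M 0 1) (M 1 0) (M 1 1).
Proof.
apply/matrixP => i j; rewrite !mxE.
by case: i => [[|[|i]] Hi] //; case: j => [[|[|j]] Hj] //=; congr (M _ _); apply: val_inj.
Qed.

Lemma mul_mx2 (a b c d a' b' c' d' : F) :
  mx2 a b c d *m mx2 a' b' c' d' =
  mx2 (a * a' + b * c') (a * b' + b * d') (c * a' + d * c') (c * b' + d * d').
Proof.
apply/matrixP => i j; rewrite !mxE !big_ord_recr big_ord0 /= add0r !mxE.
by case: i => [[|[|i]] Hi] //; case: j => [[|[|j]] Hj].
Qed.

Lemma det_mx2 (a b c d : F) : \det (mx2 a b c d) = a * d - b * c.
Proof.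
rewrite (expand_det_row _ 0) !big_ord_recr big_ord0 /= add0r /cofactor !mxE /=.
by rewrite !det_mx11 !mxE /= expr0 expr1; ring.
Qed.

Lemma mx2_inj (a b c d a' b' c' d' : F) :
  mx2 a b c d = mx2 a' b' c' d' -> [/\ a = a', b = b', c = c' & d = d'].
Proof.
move=> e; have E i j : mx2 a b c d i j = mx2 a' b' c' d' i j by rewrite e.
by have := E 0 0; have := E 0 1; have := E 1 0; have := E 1 1; rewrite !mxE /= => -> -> -> ->.
Qed.

Lemma mx2_1 : 1%:M = mx2 1 0 0 1.
Proof. by apply/matrixP => i j; rewrite !mxE; case: i => [[|[|i]] Hi] //; case: j => [[|[|j]] Hj]. Qed.

Lemma mx2_opp (a b c d : F) : - mx2 a b c d = mx2 (- a) (- b) (- c) (- d).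
Proof. by apply/matrixP => i j; rewrite !mxE; case: i => [[|[|i]] Hi] //; case: j => [[|[|j]] Hj]. Qed.

Definition GL_of_mx (M : 'M[F]_2) : {'GL_2[F]} := insubd (1%g : {'GL_2[F]}) M.

Lemma GL_of_mxK (M : 'M[F]_2) : \det M = 1 -> GLval (GL_of_mx M) = M.
Proof. by move=> dM; rewrite /GL_of_mx insubdK // unfold_in /= unitmxE dM unitr1. Qed.

Lemma GL_of_mx_SL2 (M : 'M[F]_2) : \det M = 1 -> GL_of_mx M \in SL2 F.
Proof. by move=> dM; rewrite inE GL_of_mxK ?dM. Qed.

Lemma det_mx_linv (A A' : 'M[F]_2) : \det A = 1 -> A' *m A = 1%:M -> \det A' = 1.
Proof. by move=> dA /(congr1 determinant); rewrite det_mulmx dA mulr1 det1. Qed.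

Lemma GL_of_mxV (A A' : 'M[F]_2) :
  \det A = 1 -> A' *m A = 1%:M -> ((GL_of_mx A)^-1)%g = GL_of_mx A'.
Proof.
move=> dA AA'; apply: mulg1_eq; apply: val_inj.
change (GLval (GL_of_mx A * GL_of_mx A')%g = GLval 1%g).
rewrite GL_MxE !GL_of_mxK ?(det_mx_linv dA AA') // GL_1E.
exact: mulmx1C.
Qed.

Lemma SL2_center_pm1 (z : {'GL_2[F]}) :
  z \in 'Z(SL2_group F)%g -> GLval z = 1%:M \/ GLval z = - 1%:M.
Proof.
move=> /centerP[zS cz].
have d1 : \det (mx2 1 1 0 1) = 1 by rewrite det_mx2; ring.
have d2 : \det (mx2 1 0 1 1) = 1 by rewrite det_mx2; ring.
have := congr1 GLval (cz _ (GL_of_mx_SL2 d1)); have := congr1 GLval (cz _ (GL_of_mx_SL2 d2)).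
rewrite !GL_MxE !GL_of_mxK // (mx2_eta (GLval z)) !mul_mx2.
move=> /mx2_inj[f1 _ f3 _] /mx2_inj[g1 _ _ _].
move: zS; rewrite inE (mx2_eta (GLval z)) det_mx2 => /eqP det1.
rewrite mx2_1 mx2_opp !mxE /= oppr0.
move: (GLval z 0 0) (GLval z 0 1) (GLval z 1 0) (GLval z 1 1) f1 f3 g1 det1
  => a b c d f1 f3 g1 det1.
have hb : b = 0 by transitivity ((a * 1 + b * 1) - (1 * a + 0 * c)); [ring | rewrite f1; ring].
have hc : c = 0 by transitivity ((1 * a + 1 * c) - (a * 1 + b * 0)); [ring | rewrite g1; ring].
have hd : d = a.
  by transitivity ((c * 1 + d * 1) - (1 * a + 1 * c) + a); [ring | rewrite f3; ring].
have /eqP : a ^+ 2 = 1 by rewrite -det1 hb hc hd; ring.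
by rewrite hb hc hd sqrf_eq1 => /orP[] /eqP ->; [left | right].
Qed.

End Matrices2.

Section MatrixCriterion.

Variables (F : finFieldType) (P : pred 'M[F]_2).
Hypotheses (P1 : P 1%:M)
  (PM : forall M N, \det M = 1 -> \det N = 1 -> P M -> P N -> P (M *m N)).

Definition SL2_pred : {set {'GL_2[F]}} := [set h in SL2 F | P (GLval h)].

Lemma SL2_pred_group_set : group_set SL2_pred.
Proof.
apply/group_setP; split; first by rewrite !inE GL_1E det1 eqxx P1.
move=> u v; rewrite !inE GL_MxE => /andP[/eqP du Pu] /andP[/eqP dv Pv].
by rewrite det_mulmx du dv mulr1 eqxx PM.
Qed.

Canonical SL2_pred_group := Group SL2_pred_group_set.

(* H is the set of determinant-one matrices satisfying P; the inverses G', X', Y'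
   are supplied explicitly, which spares concrete instances from computing [invmx]. *)
Lemma not_Yn_PSL2_mx (G G' X X' Y Y' : 'M[F]_2) :
  \det G = 1 -> G' *m G = 1%:M -> (forall M, \det M = 1 -> P M -> P (G' *m M *m G)) ->
  ~~ P G -> ~~ P (- G) ->
  \det X = 1 -> X' *m X = 1%:M -> P X ->
  \det Y = 1 -> Y' *m Y = 1%:M -> P Y ->
  X' *m Y' *m X *m Y != 1%:M -> X' *m Y' *m X *m Y != - 1%:M ->
  ~ Yn (PSL2 F).
Proof.
move=> dG GG' PG nPG nPNG dX XX' PX dY YY' PY xy_n1 xy_nN1.
have dG' := det_mx_linv dG GG'.
have dX' := det_mx_linv dX XX'; have dY' := det_mx_linv dY YY'.
have inH M : \det M = 1 -> P M -> GL_of_mx M \in SL2_pred.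
  by move=> dM PMx; rewrite !inE GL_of_mxK ?dM ?eqxx.
apply: (@not_Yn_PSL2 F SL2_pred_group (GL_of_mx G) (GL_of_mx X) (GL_of_mx Y)).
- by apply/subsetP => h /setIdP[].
- rewrite inE GL_of_mx_SL2 //=; apply/normP/eqP.
  rewrite eqEcard cardJg leqnn andbT; apply/subsetP => _ /imsetP[h /setIdP[hS Ph] ->].
  move: hS; rewrite inE => /eqP dh.
  rewrite /conjg (GL_of_mxV dG GG') !inE !GL_MxE !GL_of_mxK //.
  by rewrite !mulmxA !det_mulmx dh dG dG' !mulr1 eqxx PG.
- exact: inH.
- exact: inH.
- apply/negP => /SL2_center_pm1.
  rewrite /commg /conjg (GL_of_mxV dX XX') (GL_of_mxV dY YY') !GL_MxE !GL_of_mxK //.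
  by rewrite !mulmxA; case=> e; [move/eqP: xy_n1 | move/eqP: xy_nN1].
- apply/negP => /mulsgP[z h zZ /setIdP[_ Ph] /(congr1 GLval)].
  rewrite GL_MxE GL_of_mxK //.
  case: (SL2_center_pm1 zZ) => -> eG; first by rewrite eG mul1mx Ph in nPG.
  by rewrite eG mulNmx mul1mx opprK Ph in nPNG.
Qed.

End MatrixCriterion.

Lemma natr_card (F : finFieldType) : #|F|%:R = 0 :> F.
Proof. by have := @expg_cardG F [set: F]%G (GRing.one F) (in_setT _); rewrite cardsT. Qed.

Lemma two_neq0_of_odd_card (F : finFieldType) : odd #|F| -> (2 : F) != 0.
Proof.
move=> oF; apply/eqP => h2; have := natr_card F.
rewrite -[#|F|]odd_double_half oF natrD -muln2 natrM h2 mulr0 addr0.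
by move/eqP; rewrite oner_eq0.
Qed.

Lemma exists_notin_seq (T : finType) (s : seq T) : (size s < #|T|)%N -> exists x, x \notin s.
Proof.
move=> lt_s_T; case: (pickP (fun x => x \notin s)) => [x sx | s_full]; first by exists x.
have : (#|T| <= size s)%N.
  apply: leq_trans (card_size s); apply/subset_leq_card/subsetP => x _.
  by have /negbFE := s_full x.
by rewrite leqNgt lt_s_T.
Qed.

Lemma fourth_root_unity (F : fieldType) (i x : F) :
  i ^+ 2 = -1 -> x ^+ 4 = 1 -> x \in [:: 1; -1; i; - i].
Proof.
move=> hi x4; have /eqP : (x - 1) * (x + 1) * ((x - i) * (x + i)) = 0.
  by transitivity (x ^+ 4 - 1 + (- 1 - i ^+ 2) * (x ^+ 2 - 1)); [ring | rewrite x4 hi; ring].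
rewrite !mulf_eq0 !subr_eq0 !addr_eq0 !inE.
by case/orP => [/orP[]|/orP[]] ->; rewrite ?orbT.
Qed.

Lemma not_Yn_PSL2_sqrtN1 (F : finFieldType) (i : F) :
  odd #|F| -> (7 <= #|F|)%N -> i ^+ 2 = -1 -> ~ Yn (PSL2 F).
Proof.
move=> oF cardF7 hi; have n2 := two_neq0_of_odd_card oF.
have [c] : exists c : F, c \notin [:: 0; 1; -1; i; -i].
  by apply: exists_notin_seq; apply: ltnW.
rewrite !inE negb_or => /andP[c0 hc].
have c4 : c ^+ 4 != 1 by apply: contra hc => /eqP /(fourth_root_unity hi); rewrite !inE.
pose P := fun M : 'M[F]_2 => (M 1 0 == 0) && (M 0 0 ^+ 4 == 1).
have PE a b d : P (mx2 a b 0 d) = (a ^+ 4 == 1) by rewrite /P !mxE eqxx.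
have i4 : i ^+ 4 = 1 by rewrite (exprM i 2 2) hi sqrrN expr1n.
have ii : i * i = -1 by rewrite -expr2.
have comm : mx2 (- i) 0 0 i *m mx2 1 (-1) 0 1 *m mx2 i 0 0 (- i) *m mx2 1 1 0 1 = mx2 1 2 0 1.
  by rewrite !mul_mx2 !(mulNr, mulrN, mul0r, mulr0, mul1r, mulr1, addr0, add0r, ii, opprK, oppr0).
apply: (@not_Yn_PSL2_mx F P _ _ (mx2 c 0 0 c^-1) (mx2 c^-1 0 0 c) (mx2 i 0 0 (- i))
          (mx2 (- i) 0 0 i) (mx2 1 1 0 1) (mx2 1 (-1) 0 1)).
- by rewrite mx2_1 PE expr1n.
- move=> M N _ _; rewrite (mx2_eta M) (mx2_eta N) mul_mx2 /P !mxE /=.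
  move=> /andP[/eqP -> /eqP h1] /andP[/eqP -> /eqP h2].
  by rewrite !mulr0 !mul0r !addr0 eqxx exprMn h1 h2 mulr1 eqxx.
- by rewrite det_mx2 mulfV // mulr0 subr0.
- by rewrite mul_mx2 mx2_1; congr mx2; field.
- move=> M _; rewrite (mx2_eta M) !mul_mx2 /P !mxE /= => /andP[/eqP -> /eqP h1].
  by rewrite !(mul0r, mulr0, addr0, add0r) eqxx /= (mulrC c^-1) mulfVK // h1 eqxx.
- by rewrite PE.
- by rewrite mx2_opp oppr0 PE (_ : (- c) ^+ 4 = c ^+ 4) //; ring.
- by rewrite det_mx2 mulrN ii; ring.
- by rewrite mul_mx2 mx2_1 !(mulNr, mulrN, mul0r, mulr0, addr0, add0r, ii, opprK, oppr0).
- by rewrite PE i4.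
- by rewrite det_mx2; ring.
- by rewrite mul_mx2 mx2_1; congr mx2; ring.
- by rewrite PE expr1n.
- by rewrite comm mx2_1; apply/eqP => /mx2_inj[_ e _ _]; rewrite e eqxx in n2.
- rewrite comm mx2_1 mx2_opp oppr0; apply/eqP => /mx2_inj[_ e _ _].
  by rewrite e eqxx in n2.
Qed.

Definition quad := (nat * nat * nat * nat)%type.

Definition mulq7 (a b : quad) : quad :=
  let: (a0, a1, a2, a3) := a in let: (b0, b1, b2, b3) := b in
  (((a0 * b0 + a1 * b2) %% 7)%N, ((a0 * b1 + a1 * b3) %% 7)%N,
   ((a2 * b0 + a3 * b2) %% 7)%N, ((a2 * b1 + a3 * b3) %% 7)%N).

Definition oppq7 (a : quad) : quad :=
  let: (a0, a1, a2, a3) := a in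
  (((7 - a0) %% 7)%N, ((7 - a1) %% 7)%N, ((7 - a2) %% 7)%N, ((7 - a3) %% 7)%N).

Definition quad_lt7 (a : quad) : bool :=
  let: (a0, a1, a2, a3) := a in [&& (a0 < 7)%N, (a1 < 7)%N, (a2 < 7)%N & (a3 < 7)%N].

Definition quad_det1 (a : quad) : bool :=
  let: (a0, a1, a2, a3) := a in ((a0 * a3) %% 7 == (a1 * a2 + 1) %% 7)%N.

Definition mx_of_quad (F : finFieldType) (a : quad) : 'M[F]_2 :=
  let: (a0, a1, a2, a3) := a in mx2 a0%:R a1%:R a2%:R a3%:R.

(* The 24 elements of a copy of SL(2,3) in SL(2,7), each matrix written as its
   row-major entries mod 7; its image A4 in PSL(2,7) is normalized by an S4. *)
Definition SL23_in_SL27 : seq quad :=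
  [:: (0, 1, 6, 0); (0, 2, 3, 1); (0, 3, 2, 1); (0, 4, 5, 6); (0, 5, 4, 6); (0, 6, 1, 0);
      (1, 0, 0, 1); (1, 4, 5, 0); (1, 5, 4, 0); (2, 0, 1, 4); (2, 1, 0, 4); (2, 3, 3, 5);
      (3, 0, 1, 5); (3, 1, 0, 5); (3, 5, 5, 4); (4, 0, 6, 2); (4, 2, 2, 3); (4, 6, 0, 2);
      (5, 0, 6, 3); (5, 4, 4, 2); (5, 6, 0, 3); (6, 0, 0, 6); (6, 2, 3, 0); (6, 3, 2, 0)]%N.

Lemma SL23_in_SL27_lt7 : all quad_lt7 SL23_in_SL27.
Proof. by vm_compute. Qed.

Lemma SL23_in_SL27_mul_closed :
  all (fun t => all (fun u => mulq7 t u \in SL23_in_SL27) SL23_in_SL27) SL23_in_SL27.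
Proof. by vm_compute. Qed.

Lemma SL23_in_SL27_conj_closed :
  all (fun t => mulq7 (mulq7 (5, 2, 5, 5)%N t) (5, 5, 2, 5)%N \in SL23_in_SL27) SL23_in_SL27.
Proof. by vm_compute. Qed.

Section Order7.

Variable F : finFieldType.
Hypothesis cardF7 : #|F| = 7%N.

Let ch7 : 7%N \in [pchar F].
Proof. by apply: (@card_finPcharP F 7 1); rewrite ?cardF7. Qed.

Let natr7 : 7%:R = 0 :> F.
Proof. by rewrite -cardF7 natr_card. Qed.

Lemma natr_mod7 (n : nat) : (n %% 7)%N%:R = n%:R :> F.
Proof. by rewrite {2}(divn_eq n 7) natrD natrM natr7 mulr0 add0r. Qed.

Lemma natr_inj_lt7 (a b : nat) : (a < 7)%N -> (b < 7)%N -> a%:R = b%:R :> F -> a = b.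
Proof.
wlog le_ab : a b / (a <= b)%N => [hw a7 b7 e|a7 b7 e].
  by case: (leqP a b) => [|/ltnW] h; [|symmetry]; apply: hw.
have : (7 %| b - a)%N by rewrite (dvdn_pcharf ch7) natrB // e subrr.
lia.
Qed.

Lemma mx_of_quad_mul (t u : quad) :
  mx_of_quad F t *m mx_of_quad F u = mx_of_quad F (mulq7 t u).
Proof.
case: t => [[[a0 a1] a2] a3]; case: u => [[[b0 b1] b2] b3].
by rewrite /= mul_mx2 !natr_mod7 !natrD !natrM.
Qed.

Lemma mx_of_quad_opp (t : quad) : quad_lt7 t -> - mx_of_quad F t = mx_of_quad F (oppq7 t).
Proof.
case: t => [[[a0 a1] a2] a3] /= /and4P[h0 h1 h2 h3].
by rewrite mx2_opp !natr_mod7 !natrB ?(ltnW h0) ?(ltnW h1) ?(ltnW h2) ?(ltnW h3) // natr7 !sub0r.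
Qed.

Lemma mx_of_quad_inj (t u : quad) : quad_lt7 t -> quad_lt7 u ->
  mx_of_quad F t = mx_of_quad F u -> t = u.
Proof.
case: t => [[[a0 a1] a2] a3]; case: u => [[[b0 b1] b2] b3].
move=> /and4P[h0 h1 h2 h3] /and4P[k0 k1 k2 k3] /mx2_inj[e0 e1 e2 e3].
by rewrite (natr_inj_lt7 h0 k0 e0) (natr_inj_lt7 h1 k1 e1) (natr_inj_lt7 h2 k2 e2)
  (natr_inj_lt7 h3 k3 e3).
Qed.

Lemma det_mx_of_quad (t : quad) : quad_det1 t -> \det (mx_of_quad F t) = 1.
Proof.
case: t => [[[a0 a1] a2] a3] /= /eqP e.
by rewrite det_mx2 -!natrM -natr_mod7 e natr_mod7 natrD addrC addKr.
Qed.

Lemma mx_of_quad1 : mx_of_quad F (1, 0, 0, 1)%N = 1%:M.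
Proof. by rewrite mx2_1. Qed.

Lemma not_Yn_PSL2_card7 : ~ Yn (PSL2 F).
Proof.
pose P M := has (fun t => M == mx_of_quad F t) SL23_in_SL27.
have P_quad t : t \in SL23_in_SL27 -> P (mx_of_quad F t) by move=> tL; apply/hasP; exists t.
have notP t : quad_lt7 t -> t \notin SL23_in_SL27 -> ~~ P (mx_of_quad F t).
  move=> st tL; apply/hasP => -[u uL /eqP e].
  by move: tL; rewrite (mx_of_quad_inj st (allP SL23_in_SL27_lt7 u uL) e) uL.
have quad_neq t u : quad_lt7 t -> quad_lt7 u -> t != u -> mx_of_quad F t != mx_of_quad F u.
  by move=> st su; apply: contra => /eqP /(mx_of_quad_inj st su) ->.
apply: (@not_Yn_PSL2_mx F P _ _ (mx_of_quad F (5, 5, 2, 5)%N) (mx_of_quad F (5, 2, 5, 5)%N)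
          (mx_of_quad F (0, 1, 6, 0)%N) (mx_of_quad F (0, 6, 1, 0)%N)
          (mx_of_quad F (2, 1, 0, 4)%N) (mx_of_quad F (4, 6, 0, 2)%N)).
- by rewrite -mx_of_quad1 P_quad.
- move=> M N _ _ /hasP[t tL /eqP->] /hasP[u uL /eqP->].
  by rewrite mx_of_quad_mul P_quad // (allP (allP SL23_in_SL27_mul_closed t tL)).
- exact: det_mx_of_quad.
- by rewrite mx_of_quad_mul -mx_of_quad1.
- move=> M _ /hasP[t tL /eqP->].
  by rewrite !mx_of_quad_mul P_quad // (allP SL23_in_SL27_conj_closed).
- exact: notP.
- by rewrite mx_of_quad_opp // notP.
- exact: det_mx_of_quad.
- by rewrite mx_of_quad_mul -mx_of_quad1.
- exact: P_quad.
- exact: det_mx_of_quad.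
- by rewrite mx_of_quad_mul -mx_of_quad1.
- exact: P_quad.
- by rewrite !mx_of_quad_mul -mx_of_quad1 quad_neq.
- by rewrite !mx_of_quad_mul -mx_of_quad1 mx_of_quad_opp // quad_neq.
Qed.

End Order7.

Lemma card_le_double_imset (T U : finType) (A : {set T}) (f : T -> U) (s : T -> T) :
  (forall x y, x \in A -> y \in A -> f x = f y -> y = x \/ y = s x) ->
  (#|A| <= 2 * #|f @: A|)%N.
Proof.
move=> fib; rewrite -[#|A|]sum1_card (partition_big_imset f) /= mulnC -sum_nat_const.
apply: leq_sum => _ /imsetP[y yA ->]; rewrite sum1dep_card.
apply: (@leq_trans #|[set y; s y]|); last by rewrite cards2; case: (_ != _).
apply/subset_leq_card/subsetP => x; rewrite !inE => /andP[xA /eqP e].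
by case: (fib _ _ yA xA (esym e)) => ->; rewrite eqxx ?orbT.
Qed.

Lemma double_card_imset_le (T U : finType) (A : {set T}) (f : T -> U) (s : T -> T) :
  (forall x, x \in A -> [/\ s x \in A, s x != x & f (s x) = f x]) ->
  (2 * #|f @: A| <= #|A|)%N.
Proof.
move=> fib; rewrite -[#|A|]sum1_card (partition_big_imset f) /= mulnC -sum_nat_const.
apply: leq_sum => _ /imsetP[y yA ->]; rewrite sum1dep_card.
have [syA sy_neq fs] := fib _ yA.
have <- : #|[set y; s y]| = 2%N by rewrite cards2 eq_sym sy_neq.
apply/subset_leq_card/subsetP => x; rewrite !inE.
by case/orP => /eqP ->; rewrite ?fs eqxx ?yA ?syA.
Qed.

Lemma eq_sqr_pm (F : fieldType) (x y : F) : x ^+ 2 = y ^+ 2 -> y = x \/ y = - x.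
Proof.
move=> e; have /eqP : (y - x) * (y + x) = 0 by rewrite -subr_sqr e subrr.
by rewrite mulf_eq0 subr_eq0 addr_eq0 => /orP[] /eqP; [left | right].
Qed.

Lemma self_opp_eq0 (F : fieldType) (x : F) : (2 : F) != 0 -> x = - x -> x = 0.
Proof.
move=> n2 e; have /eqP : 2 * x = 0 by rewrite mulr2n mulrDl mul1r {1}e addNr.
by rewrite mulf_eq0 (negbTE n2) => /eqP.
Qed.

Lemma exists_sqr_add_sqr_eqN1 (F : finFieldType) :
  odd #|F| -> exists a b : F, a ^+ 2 + b ^+ 2 = -1.
Proof.
move=> oF.
pose Sq := (fun x : F => x ^+ 2) @: [set: F].
pose NSq := (fun y : F => -1 - y) @: Sq.
have Sq_half : (#|F| <= 2 * #|Sq|)%N.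
  by rewrite -cardsT; apply: (card_le_double_imset (s := -%R)) => x y _ _ /eq_sqr_pm.
have card_NSq : #|NSq| = #|Sq|.
  by apply: card_imset => u v /= e; apply: oppr_inj; apply: (addrI (-1)).
have [SqNSq0|[z]] := set_0Vmem (Sq :&: NSq).
  have : (#|Sq :|: NSq| <= #|F|)%N by apply: max_card.
  rewrite cardsU SqNSq0 cards0 subn0 card_NSq addnn -mul2n leqNgt; case/negP.
  rewrite ltn_neqAle Sq_half andbT; apply/negP => /eqP e.
  by move: oF; rewrite e oddM.
rewrite inE => /andP[/imsetP[a _ ->] /imsetP[_ /imsetP[b _ ->] e]].
by exists a, b; rewrite e; ring.
Qed.

Section Circle.

Variable F : finFieldType.
Implicit Types p q : F * F.

(* A pair (a, b) stands for a + b i in F[i] with i^2 = -1; [circle] is the group of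
   elements of norm one, embedded in SL(2,F) by [rotmx]. *)
Definition cmul p q : F * F := (p.1 * q.1 - p.2 * q.2, p.1 * q.2 + p.2 * q.1).
Definition csqr p := cmul p p.
Definition cconj p : F * F := (p.1, - p.2).
Definition copp p : F * F := (- p.1, - p.2).
Definition circle : {set F * F} := [set p | p.1 ^+ 2 + p.2 ^+ 2 == 1].
Definition rotmx p : 'M[F]_2 := mx2 p.1 p.2 (- p.2) p.1.

Lemma cmulC p q : cmul p q = cmul q p.
Proof. by congr (_, _); ring. Qed.

Lemma cmulA p q r : cmul p (cmul q r) = cmul (cmul p q) r.
Proof. by congr (_, _); rewrite /=; ring. Qed.

Lemma cmul1 p : cmul (1, 0) p = p.
Proof. by case: p => a b; congr (_, _); rewrite /=; ring. Qed.

Lemma csqrM p q : csqr (cmul p q) = cmul (csqr p) (csqr q).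
Proof. by congr (_, _); rewrite /=; ring. Qed.

Lemma csqr_conj p : csqr (cconj p) = cconj (csqr p).
Proof. by congr (_, _); rewrite /=; ring. Qed.

Lemma csqr_opp p : csqr (copp p) = csqr p.
Proof. by congr (_, _); rewrite /=; ring. Qed.

Lemma cconjK p : cconj (cconj p) = p.
Proof. by case: p => a b; rewrite /cconj /= opprK. Qed.

Lemma cmul_conjl p : p \in circle -> cmul (cconj p) p = (1, 0).
Proof. by rewrite inE => /eqP e; congr (_, _); rewrite /= -?e; ring. Qed.

Lemma circle_mul p q : p \in circle -> q \in circle -> cmul p q \in circle.
Proof. by rewrite !inE => /eqP e1 /eqP e2; apply/eqP; rewrite -[1]mulr1 -{1}e1 -e2 /=; ring. Qed.

Lemma circle_conj p : p \in circle -> cconj p \in circle.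
Proof. by rewrite !inE /= sqrrN. Qed.

Lemma circle_opp p : p \in circle -> copp p \in circle.
Proof. by rewrite !inE /= !sqrrN. Qed.

Lemma circle1 : ((1 : F), (0 : F)) \in circle.
Proof. by rewrite inE /= expr0n expr1n addr0. Qed.

Lemma circle_i : ((0 : F), (1 : F)) \in circle.
Proof. by rewrite inE /= expr0n expr1n add0r. Qed.

Lemma csqr1 : csqr (1, 0) = (1, 0).
Proof. by congr (_, _); rewrite /=; ring. Qed.

Lemma csqr_mul_i p : csqr (cmul (0, 1) p) = copp (csqr p).
Proof. by congr (_, _); rewrite /=; ring. Qed.

Lemma rotmxM p q : rotmx p *m rotmx q = rotmx (cmul p q).
Proof. by rewrite /rotmx mul_mx2; congr mx2; rewrite /=; ring. Qed.

Lemma det_rotmx p : \det (rotmx p) = p.1 ^+ 2 + p.2 ^+ 2.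
Proof. by rewrite det_mx2; ring. Qed.

Lemma det_rotmx_circle p : p \in circle -> \det (rotmx p) = 1.
Proof. by rewrite det_rotmx inE => /eqP. Qed.

Lemma rotmx_inj : injective rotmx.
Proof. by case=> [a b] [c d] /mx2_inj[/= -> -> _ _]. Qed.

Lemma rotmx_opp p : - rotmx p = rotmx (copp p).
Proof. by rewrite /rotmx mx2_opp /= opprK. Qed.

Lemma rotmx1 : rotmx (1, 0) = 1%:M.
Proof. by rewrite /rotmx mx2_1 /= oppr0. Qed.

Lemma rotmx_conjl p : p \in circle -> rotmx (cconj p) *m rotmx p = 1%:M.
Proof. by move=> pT; rewrite rotmxM cmul_conjl // rotmx1. Qed.

Section NoSqrtN1.

Hypotheses (two_neq0 : (2 : F) != 0) (no_sqrtN1 : forall z : F, z ^+ 2 != -1).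

Lemma csqr_inj_pm p q : p \in circle -> q \in circle -> csqr p = csqr q ->
  q = p \/ q = copp p.
Proof.
move=> pT qT e.
pose u := cmul q (cconj p).
have qu : q = cmul u p by rewrite /u -cmulA cmul_conjl // cmulC cmul1.
have su : csqr u = (1, 0).
  by rewrite /u csqrM -e -csqrM cmulC cmul_conjl //; congr (_, _); rewrite /=; ring.
case: u su qu => u1 u2 /= [e1 e2] ->.
have /eqP : 2 * (u1 * u2) = 0 by rewrite -e2; ring.
rewrite mulf_eq0 (negbTE two_neq0) /= mulf_eq0 => /orP[] /eqP u0.
- by move: (no_sqrtN1 u2); rewrite -e1 u0; case/eqP; ring.
- move: e1; rewrite u0 mulr0 subr0 => /eqP; rewrite -expr2 sqrf_eq1 => /orP[] /eqP ->.
  + by left; rewrite cmul1.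
  + by right; case: p {pT e qT} => a b; congr (_, _); rewrite /=; ring.
Qed.

Definition circle_param (o : option F) : F * F :=
  if o is Some u then ((1 - u ^+ 2) / (1 + u ^+ 2), (2 * u) / (1 + u ^+ 2)) else (-1, 0).

Lemma circle_param_inj : injective circle_param.
Proof.
have nz (u : F) : 1 + u ^+ 2 != 0 by apply: contra (no_sqrtN1 u); rewrite addrC addr_eq0.
have neq (u : F) : circle_param (Some u) != circle_param None.
  apply/eqP => -[e _]; move/eqP: two_neq0; apply.
  have : 1 - u ^+ 2 = - (1 + u ^+ 2) by rewrite -[RHS]mulN1r -e mulfVK.
  by move=> h; transitivity ((1 + u ^+ 2) + (1 - u ^+ 2)); [ring | rewrite h; ring].
move=> [u|] [v|] //; last 2 first.
- by move=> e; move: (neq u); rewrite e eqxx.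
- by move=> e; move: (neq v); rewrite e eqxx.
have ku (w : F) : (circle_param (Some w)).2 / (1 + (circle_param (Some w)).1) = w.
  rewrite /=; field; rewrite ?nz //.
  by rewrite (_ : 1 + w ^+ 2 + (1 - w ^+ 2) = 2) //; ring.
by move=> e; congr Some; rewrite -(ku u) e ku.
Qed.

Lemma card_circle : (#|F|.+1 <= #|circle|)%N.
Proof.
have nz (u : F) : 1 + u ^+ 2 != 0 by apply: contra (no_sqrtN1 u); rewrite addrC addr_eq0.
rewrite -card_option -(card_imset _ circle_param_inj).
apply/subset_leq_card/subsetP => _ /imsetP[[u|] _ ->]; rewrite inE /=.
  by apply/eqP; field.
by rewrite sqrrN expr1n expr0n addr0.
Qed.

Lemma card_circle_csqr : #|circle| = (2 * #|csqr @: circle|)%N.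
Proof.
apply/eqP; rewrite eqn_leq; apply/andP; split.
  by apply: (card_le_double_imset (s := copp)) => x y xT yT /csqr_inj_pm; apply.
apply: (double_card_imset_le (s := copp)) => -[a b] pT.
split; [exact: circle_opp | | exact: csqr_opp].
apply: contraTneq pT => -[/esym/(self_opp_eq0 two_neq0) a0 /esym/(self_opp_eq0 two_neq0) b0].
by rewrite inE /= a0 b0 expr0n addr0 eq_sym oner_eq0.
Qed.

Lemma exists_circle_nonsquare : exists2 r, r \in circle & r \notin csqr @: circle.
Proof.
have Q_gt0 : (0 < #|csqr @: circle|)%N.
  by apply/card_gt0P; exists (csqr (1, 0)); rewrite imset_f ?circle1.
have : ~~ (circle \subset csqr @: circle).
  by apply/negP => /subset_leq_card; rewrite card_circle_csqr; move: Q_gt0; set n := #|_|; lia.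
by case/subsetPn => r; exists r.
Qed.

Lemma exists_circle_fourth_power_nonreal :
  (9 <= #|F|)%N -> exists2 k, k \in circle & (csqr (csqr k)).2 != 0.
Proof.
move=> cardF9; have := card_circle; rewrite card_circle_csqr => cardQ.
have : ~~ (csqr @: circle \subset [:: (1, 0); (-1, 0); (0, 1); (0, -1)]).
  apply/negP => /subset_leq_card/leq_trans/(_ (card_size _)) /=.
  by move: cardQ; set n := #|csqr @: circle|; lia.
case/subsetPn => _ /imsetP[k kT ->] qn; exists k => //.
move: (circle_mul kT kT : csqr k \in circle) qn; case: (csqr k) => a b; rewrite inE /= => /eqP hab qn.
apply: contra qn => /eqP h.
have /eqP : 2 * (a * b) = 0 by rewrite -h; ring.
rewrite mulf_eq0 (negbTE two_neq0) /= mulf_eq0 => /orP[] /eqP ab0; move: hab; rewrite ab0.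
- by rewrite expr0n add0r => /eqP; rewrite sqrf_eq1 => /orP[] /eqP ->; rewrite !inE eqxx ?orbT.
- by rewrite expr0n addr0 => /eqP; rewrite sqrf_eq1 => /orP[] /eqP ->; rewrite !inE eqxx ?orbT.
Qed.

End NoSqrtN1.

End Circle.

Section CircleExtension.

Variables (F : finFieldType) (S : 'M[F]_2).
Hypotheses (two_neq0 : (2 : F) != 0) (SS : S *m S = - 1%:M)
  (S_rotmx : forall p, S *m rotmx p = rotmx (cconj p) *m S).

Definition in_circle_ext (M : 'M[F]_2) : bool :=
  [exists k in circle F, M == rotmx (csqr k)] ||
  [exists k in circle F, M == S *m rotmx (csqr k)].

Lemma rotmx_S p : rotmx p *m S = S *m rotmx (cconj p).
Proof. by rewrite S_rotmx cconjK. Qed.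

Lemma S_neq_rotmx p : S != rotmx p.
Proof.
apply/eqP => Sp; have := S_rotmx (0, 1); rewrite Sp !rotmxM => /rotmx_inj.
case: p Sp => a b Sp /= [e1 e2].
have a0 : a = 0.
  by apply: self_opp_eq0 => //; transitivity (a * 1 + b * 0); [ring | rewrite e2; ring].
have b0 : b = 0.
  by apply: self_opp_eq0 => //; transitivity (- (a * 0 - b * 1)); [ring | rewrite e1; ring].
move: SS; rewrite Sp a0 b0 rotmxM -rotmx1 rotmx_opp => /rotmx_inj[].
by rewrite /= mulr0 subrr => /eqP; rewrite eq_sym oppr_eq0 oner_eq0.
Qed.

Lemma in_circle_ext_rotmx k : k \in circle F -> in_circle_ext (rotmx (csqr k)).
Proof. by move=> kT; apply/orP; left; apply/existsP; exists k; rewrite kT eqxx. Qed.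

Lemma in_circle_ext_Srotmx k : k \in circle F -> in_circle_ext (S *m rotmx (csqr k)).
Proof. by move=> kT; apply/orP; right; apply/existsP; exists k; rewrite kT eqxx. Qed.

Lemma in_circle_ext1 : in_circle_ext 1%:M.
Proof. by rewrite -rotmx1 -csqr1 in_circle_ext_rotmx ?circle1. Qed.

Lemma in_circle_extS : in_circle_ext S.
Proof. by rewrite -[X in in_circle_ext X]mulmx1 -rotmx1 -csqr1 in_circle_ext_Srotmx ?circle1. Qed.

Lemma in_circle_extP M :
  in_circle_ext M -> exists2 k, k \in circle F & M = rotmx (csqr k) \/ M = S *m rotmx (csqr k).
Proof. by case/orP => /exists_inP[k kT /eqP->]; exists k => //; [left | right]. Qed.

Lemma in_circle_ext_mul M N : in_circle_ext M -> in_circle_ext N -> in_circle_ext (M *m N).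
Proof.
move=> /in_circle_extP[k kT [->|->]] /in_circle_extP[l lT [->|->]].
- by rewrite rotmxM -csqrM in_circle_ext_rotmx ?circle_mul.
- rewrite mulmxA rotmx_S -mulmxA rotmxM -csqr_conj -csqrM.
  by rewrite in_circle_ext_Srotmx ?circle_mul ?circle_conj.
- by rewrite -mulmxA rotmxM -csqrM in_circle_ext_Srotmx ?circle_mul.
- rewrite -mulmxA (mulmxA (rotmx _)) rotmx_S !mulmxA SS mulNmx mul1mx.
  rewrite rotmx_opp rotmxM (_ : cmul _ _ = csqr (cmul (0, 1) (cmul (cconj k) l))).
    by rewrite in_circle_ext_rotmx ?circle_mul ?circle_conj ?circle_i.
  by congr (_, _); rewrite /=; ring.
Qed.

Lemma in_circle_ext_conj r M : r \in circle F -> in_circle_ext M ->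
  in_circle_ext (rotmx (cconj r) *m M *m rotmx r).
Proof.
move=> rT /in_circle_extP[k kT [->|->]].
- by rewrite !rotmxM cmulC cmulA (cmulC r) cmul_conjl // cmul1 in_circle_ext_rotmx.
- rewrite !mulmxA rotmx_S cconjK -!mulmxA !rotmxM (_ : cmul r _ = csqr (cmul r k)).
    by rewrite in_circle_ext_Srotmx ?circle_mul.
  by congr (_, _); rewrite /=; ring.
Qed.

Lemma rotmx_notin_circle_ext p : p \notin (@csqr F) @: circle F -> ~~ in_circle_ext (rotmx p).
Proof.
move=> pQ; apply/negP => /in_circle_extP[k kT [/rotmx_inj e|e]].
  by move: pQ; rewrite e imset_f.
have kkT : csqr k \in circle F by apply: circle_mul.
have : S = rotmx (cmul p (cconj (csqr k))).
  by rewrite -rotmxM e -mulmxA rotmxM cmulC cmul_conjl // rotmx1 mulmx1.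
by apply/eqP; rewrite S_neq_rotmx.
Qed.

End CircleExtension.

Lemma not_Yn_PSL2_no_sqrtN1 (F : finFieldType) :
  odd #|F| -> (9 <= #|F|)%N -> (forall z : F, z ^+ 2 != -1) -> ~ Yn (PSL2 F).
Proof.
move=> oF cardF9 no_sqrtN1; have n2 := two_neq0_of_odd_card oF.
have [a [b hab]] := exists_sqr_add_sqr_eqN1 oF.
pose S := mx2 a b b (- a).
have dS : \det S = 1 by rewrite det_mx2 -[1]opprK -hab; ring.
have SS : S *m S = - 1%:M by rewrite mul_mx2 mx2_1 mx2_opp; congr mx2; rewrite -?hab; ring.
have S_rotmx p : S *m rotmx p = rotmx (cconj p) *m S.
  by rewrite /rotmx !mul_mx2; congr mx2; rewrite /=; ring.
have [r rT rQ] := exists_circle_nonsquare n2 no_sqrtN1.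
have [k kT k4] := exists_circle_fourth_power_nonreal n2 no_sqrtN1 cardF9.
pose q := csqr k; have qT : q \in circle F by apply: circle_mul.
have comm : - S *m rotmx (cconj q) *m S *m rotmx q = rotmx (csqr q).
  by rewrite !mulNmx S_rotmx cconjK -(mulmxA (rotmx q)) SS mulmxN mulmx1 mulNmx opprK rotmxM.
have comm_neq p : p.2 = 0 -> rotmx (csqr q) != rotmx p.
  by move=> p2; apply: contraNneq k4 => /rotmx_inj e; rewrite -p2 -e.
apply: (@not_Yn_PSL2_mx F (in_circle_ext S) _ _ (rotmx r) (rotmx (cconj r)) S (- S)
          (rotmx q) (rotmx (cconj q))).
- exact: in_circle_ext1.
- by move=> M N _ _; apply: in_circle_ext_mul.
- exact: det_rotmx_circle.
- exact: rotmx_conjl.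
- by move=> M _; apply: in_circle_ext_conj.
- exact: rotmx_notin_circle_ext.
- rewrite rotmx_opp; apply: rotmx_notin_circle_ext => //.
  apply: contra rQ => /imsetP[l lT e]; apply/imsetP; exists (cmul (0, 1) l).
    by rewrite circle_mul ?circle_i.
  by rewrite csqr_mul_i -e; case: (r) => x y; rewrite /copp /= !opprK.
- exact: dS.
- by rewrite mulNmx SS opprK.
- exact: in_circle_extS.
- exact: det_rotmx_circle.
- exact: rotmx_conjl.
- exact: in_circle_ext_rotmx.
- by rewrite comm -rotmx1 comm_neq.
- by rewrite comm -rotmx1 rotmx_opp comm_neq //= oppr0.
Qed.

Local Close Scope ring_scope.

Theorem lemma2p16 (F : finFieldType) :
  odd #|F| -> #|F| <> 3 -> #|F| <> 5 -> ~ Yn (PSL2 F).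
Proof.
move=> oF n3 n5.
have card_gt1 : 1 < #|F| by apply: finNzRing_gt1.
have [card7|n7] := #|F| =P 7; first exact: not_Yn_PSL2_card7.
have cardF9 : 9 <= #|F|.
  by move: oF card_gt1 n3 n5 n7; case: #|F| => [|[|[|[|[|[|[|[|[|n]]]]]]]]].
case: (pickP (fun i : F => i ^+ 2 == -1)%R) => [i /eqP sqr_i|no_sqrtN1].
  by apply: not_Yn_PSL2_sqrtN1 sqr_i => //; apply: leq_trans cardF9.
by apply: not_Yn_PSL2_no_sqrtN1 => // z; rewrite no_sqrtN1.
Qed.
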